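(* Let $A$ be a non-zero evolution algebra. Then (i) $A$ is semisimple if and only if $A$ is a non-zero trivial evolution algebra; (ii) $A/\mathrm{Rad}(A)$ is either $\{0\}$ or a non-zero trivial evolution algebra.
   Context: An evolution algebra is an algebra $A$ over $\mathbb{K}\in\{\mathbb{R},\mathbb{C}\}$ with a basis $\{e_i:i\in\Lambda\}$ (natural basis) with $e_ie_j=0$ for $i\neq j$. A non-zero trivial evolution algebra is one having a natural basis with $e_i^2=\omega_{ii}e_i$, $\omega_{ii}\neq0$, for all $i$. An ideal $M$ is modular if some $u\in A$ satisfies $a-au\in M$ for all $a\in A$; $\mathrm{Rad}(A)$ is the intersection of all maximal modular ideals of $A$ (equal to $A$ if there are none), and $A$ is semisimple if $\mathrm{Rad}(A)=\{0\}$. $A/\mathrm{Rad}(A)$ carries the quotient product. *)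

From HB Require Import structures.
From mathcomp Require Import all_boot all_order all_algebra.
Set Implicit Arguments. Unset Strict Implicit. Unset Printing Implicit Defensive.
Import Order.TTheory GRing.Theory Num.Theory.
Local Open Scope ring_scope.

Section EvolutionAlgebras.
Variables (K : numFieldType) (A : lmodType K) (mul : A -> A -> A).

Definition bilinear_prod : Prop :=
  (forall a b c, mul (a + b) c = mul a c + mul b c) /\
  (forall (k : K) a c, mul (k *: a) c = k *: mul a c) /\
  (forall a b c, mul c (a + b) = mul c a + mul c b) /\
  (forall (k : K) a c, mul c (k *: a) = k *: mul c a).

(* Notions "modulo" a subset M of A: these describe the quotient A/M (with the
   quotient product) through representatives; M = {0} gives the notions on A. *)
Definition zero_set : A -> Prop := fun a => a = 0.

Definition basis_mod (M : A -> Prop) (I : Type) (e : I -> A) : Prop :=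
  (forall a : A, exists (n : nat) (f : 'I_n -> I) (c : 'I_n -> K),
      M (a - \sum_(k < n) c k *: e (f k))) /\
  (forall (n : nat) (f : 'I_n -> I) (c : 'I_n -> K), injective f ->
      M (\sum_(k < n) c k *: e (f k)) -> forall k, c k = 0).

Definition natural_basis_mod (M : A -> Prop) (I : Type) (e : I -> A) : Prop :=
  basis_mod M e /\ forall i j, i <> j -> M (mul (e i) (e j)).

Definition evolution_algebra_mod (M : A -> Prop) : Prop :=
  exists (I : Type) (e : I -> A), natural_basis_mod M e.

Definition nonzero_trivial_evolution_mod (M : A -> Prop) : Prop :=
  (exists a : A, ~ M a) /\
  exists (I : Type) (e : I -> A) (w : I -> K),
    natural_basis_mod M e /\
    forall i, w i <> 0 /\ M (mul (e i) (e i) - w i *: e i).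

Definition evolution_algebra : Prop := evolution_algebra_mod zero_set.
Definition nonzero_trivial_evolution : Prop :=
  nonzero_trivial_evolution_mod zero_set.

Definition is_ideal (M : A -> Prop) : Prop :=
  M 0 /\ (forall a b, M a -> M b -> M (a + b)) /\
  (forall (k : K) a, M a -> M (k *: a)) /\
  (forall a x, M a -> M (mul x a) /\ M (mul a x)).

Definition maximal_ideal (M : A -> Prop) : Prop :=
  is_ideal M /\ (exists a, ~ M a) /\
  forall N : A -> Prop, is_ideal N -> (forall a, M a -> N a) ->
    (forall a, N a <-> M a) \/ (forall a, N a).

Definition modular (M : A -> Prop) : Prop :=
  exists u : A, forall a : A, M (a - mul a u).

Definition maximal_modular_ideal (M : A -> Prop) : Prop :=
  maximal_ideal M /\ modular M.

(* Rad(A): intersection of all maximal modular ideals (= A if there are none) *)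
Definition Rad : A -> Prop :=
  fun a => forall M : A -> Prop, maximal_modular_ideal M -> M a.

Definition semisimple : Prop := forall a, Rad a -> a = 0.

End EvolutionAlgebras.

From HB Require Import structures.
From mathcomp Require Import all_boot all_order all_algebra.
From mathcomp Require Import ring boolp.
Set Implicit Arguments. Unset Strict Implicit. Unset Printing Implicit Defensive.
Import GRing.Theory Num.Theory.
Local Open Scope ring_scope.

(* Write e_j^2 = \sum_i omega_ij e_i in a natural basis and call i isolated when e_i
   occurs in e_i^2 but in no other e_j^2.  For isolated i the i-th coordinate is
   multiplicative up to the factor omega_ii, so its kernel is a maximal ideal, modular
   with unit omega_ii^-1 e_i.  Conversely a maximal modular ideal M misses some e_i;
   maximality applied to M + K e_i forces every other e_j into M, so M is the
   kernel of the i-th coordinate and i is isolated.  Hence Rad(A) consists of the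
   vectors whose isolated coordinates vanish: A is semisimple iff every index is
   isolated, i.e. iff A is trivial, and the isolated e_i form a natural basis of
   A/Rad(A) in which e_i^2 = omega_ii e_i. *)

Lemma big_uniq_single (R : zmodType) (T : eqType) (s : seq T) (k : T) (F : T -> R) :
  uniq s -> (forall j, j != k -> F j = 0) -> (k \notin s -> F k = 0) ->
  \sum_(j <- s) F j = F k.
Proof.
move=> us Fk0 Fs; have [ks|/[dup] /Fs -> ks] := boolP (k \in s).
  by rewrite (bigD1_seq k) //= big1 ?addr0.
by apply: big1_seq => j js; apply: Fk0; apply: contraNneq ks => <-.
Qed.

Section EvolutionAlgebra.
Variables (K : numFieldType) (A : lmodType K) (mul : A -> A -> A).
Hypothesis mul_bil : bilinear_prod mul.

Lemma bmulDl a b c : mul (a + b) c = mul a c + mul b c. Proof. by case: mul_bil. Qed.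
Lemma bmulZl k a c : mul (k *: a) c = k *: mul a c. Proof. by case: mul_bil => _ []. Qed.
Lemma bmulDr a b c : mul c (a + b) = mul c a + mul c b.
Proof. by case: mul_bil => _ [_ []]. Qed.
Lemma bmulZr k a c : mul c (k *: a) = k *: mul c a.
Proof. by case: mul_bil => _ [_ [_]]. Qed.
Lemma bmul0l c : mul 0 c = 0. Proof. by have := bmulZl 0 0 c; rewrite !scale0r. Qed.
Lemma bmul0r c : mul c 0 = 0. Proof. by have := bmulZr 0 0 c; rewrite !scale0r. Qed.
Lemma bmulNr a c : mul c (- a) = - mul c a. Proof. by rewrite -scaleN1r bmulZr scaleN1r. Qed.

Lemma bmul_suml (T : Type) (s : seq T) (P : pred T) (F : T -> A) c :
  mul (\sum_(x <- s | P x) F x) c = \sum_(x <- s | P x) mul (F x) c.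
Proof. exact: (big_morph (mul^~ c) (fun a b => bmulDl a b c) (bmul0l c)). Qed.
Lemma bmul_sumr (T : Type) (s : seq T) (P : pred T) (F : T -> A) c :
  mul c (\sum_(x <- s | P x) F x) = \sum_(x <- s | P x) mul c (F x).
Proof. exact: (big_morph (mul c) (fun a b => bmulDr a b c) (bmul0r c)). Qed.

Section Ideal.
Variable M : A -> Prop.
Hypothesis M_ideal : is_ideal mul M.

Lemma ideal0 : M 0. Proof. by case: M_ideal. Qed.
Lemma idealD a b : M a -> M b -> M (a + b). Proof. by case: M_ideal => _ [/(_ a b)]. Qed.
Lemma idealZ k a : M a -> M (k *: a). Proof. by case: M_ideal => _ [_ [/(_ k a)]]. Qed.
Lemma idealMl x a : M a -> M (mul x a).
Proof. by case: M_ideal => _ [_ [_ h]] /(h _ x) []. Qed.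
Lemma idealMr x a : M a -> M (mul a x).
Proof. by case: M_ideal => _ [_ [_ h]] /(h _ x) []. Qed.
Lemma idealB a b : M a -> M b -> M (a - b).
Proof. by move=> Ma Mb; rewrite -scaleN1r; apply/idealD/idealZ. Qed.

Lemma ideal_sum (T : Type) (s : seq T) (P : pred T) (F : T -> A) :
  (forall x, P x -> M (F x)) -> M (\sum_(x <- s | P x) F x).
Proof. by move=> MF; apply: big_ind => //; [exact: ideal0 | exact: idealD]. Qed.

End Ideal.

Variables (I : Type) (e : I -> A).
Hypothesis basis_e : basis_mod (@zero_set K A) e.
(* The basis index type I need not have a decidable equality; {classic I} supplies one. *)
Local Notation J := {classic I}.

Definition lincomb (r : seq (J * K)) : A := \sum_(p <- r) p.2 *: e p.1.
Definition lincomb_coef (r : seq (J * K)) (i : J) : K := \sum_(p <- r | p.1 == i) p.2.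

Lemma lincomb_cat r1 r2 : lincomb (r1 ++ r2) = lincomb r1 + lincomb r2.
Proof. by rewrite /lincomb big_cat. Qed.
Lemma lincomb_coef_cat r1 r2 i :
  lincomb_coef (r1 ++ r2) i = lincomb_coef r1 i + lincomb_coef r2 i.
Proof. by rewrite /lincomb_coef big_cat. Qed.

Definition scale_coefs (k : K) (r : seq (J * K)) := [seq (p.1, k * p.2) | p <- r].
Lemma lincomb_scale k r : lincomb (scale_coefs k r) = k *: lincomb r.
Proof.
by rewrite /lincomb big_map scaler_sumr; apply: eq_bigr => p _; rewrite scalerA.
Qed.
Lemma lincomb_coef_scale k r i : lincomb_coef (scale_coefs k r) i = k * lincomb_coef r i.
Proof. by rewrite /lincomb_coef big_map mulr_sumr. Qed.

Lemma lincomb_collect r :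
  lincomb r = \sum_(i <- undup (map fst r)) lincomb_coef r i *: e i.
Proof.
under eq_bigr do rewrite /lincomb_coef scaler_suml big_mkcond.
rewrite exchange_big /lincomb; apply: eq_big_seq => p pr /=.
rewrite (@big_uniq_single _ _ _ p.1) ?undup_uniq ?eqxx //.
- by move=> j /negbTE; rewrite eq_sym => ->.
- by rewrite mem_undup map_f.
Qed.

Lemma lincomb_coef_eq0 r : lincomb r = 0 -> forall i, lincomb_coef r i = 0.
Proof.
move=> r0 i; set s := undup (map fst r).
have [i_s|] := boolP (i \in s); last first.
  rewrite mem_undup => ir; apply: big1_seq => p /andP[/eqP pi pr].
  by move: ir; rewrite -pi map_f.
have : \sum_(j <- s) lincomb_coef r j *: e j = 0 by rewrite -lincomb_collect.
rewrite (big_nth i) big_mkord => sum0.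
have nth_inj : injective (fun k : 'I_(size s) => nth i s k).
  by move=> k1 k2 /eqP; rewrite nth_uniq // ?undup_uniq // => /eqP /val_inj.
have i_idx : (index i s < size s)%N by rewrite index_mem.
have := basis_e.2 _ _ (fun k => lincomb_coef r (nth i s k)) nth_inj sum0 (Ordinal i_idx).
by rewrite /= nth_index.
Qed.

Lemma lincomb_surj a : exists r, lincomb r = a.
Proof.
have [n [f [c fc]]] := basis_e.1 a.
exists [seq (f k, c k) | k <- enum 'I_n].
by rewrite /lincomb big_map big_enum /=; symmetry; apply: subr0_eq.
Qed.

Definition coefs_of (a : A) : seq (J * K) := projT1 (cid (lincomb_surj a)).
Lemma coefs_ofK a : lincomb (coefs_of a) = a.
Proof. exact: projT2 (cid (lincomb_surj a)). Qed.

Definition coord (i : J) (a : A) : K := lincomb_coef (coefs_of a) i.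

Lemma coord_lincomb r i : coord i (lincomb r) = lincomb_coef r i.
Proof.
have : lincomb (coefs_of (lincomb r) ++ scale_coefs (-1) r) = 0.
  by rewrite lincomb_cat lincomb_scale coefs_ofK scaleN1r subrr.
move/lincomb_coef_eq0/(_ i); rewrite lincomb_coef_cat lincomb_coef_scale mulN1r.
by move/eqP; rewrite subr_eq0 => /eqP.
Qed.

Lemma coordD i a b : coord i (a + b) = coord i a + coord i b.
Proof.
by rewrite -{1}(coefs_ofK a) -{1}(coefs_ofK b) -lincomb_cat coord_lincomb lincomb_coef_cat.
Qed.
Lemma coordZ i k a : coord i (k *: a) = k * coord i a.
Proof. by rewrite -{1}(coefs_ofK a) -lincomb_scale coord_lincomb lincomb_coef_scale. Qed.
Lemma coord0 i : coord i 0 = 0.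
Proof. by rewrite -(scale0r 0) coordZ mul0r. Qed.
Lemma coordB i a b : coord i (a - b) = coord i a - coord i b.
Proof. by rewrite coordD -scaleN1r coordZ mulN1r. Qed.
Lemma coord_sum i (T : Type) (s : seq T) (P : pred T) (F : T -> A) :
  coord i (\sum_(x <- s | P x) F x) = \sum_(x <- s | P x) coord i (F x).
Proof. exact: (big_morph (coord i) (coordD i) (coord0 i)). Qed.

Lemma coord_e i (j : J) : coord i (e j) = (j == i)%:R.
Proof.
have -> : e j = lincomb [:: (j, 1)] by rewrite /lincomb big_seq1 scale1r.
by rewrite coord_lincomb /lincomb_coef big_cons big_nil /=; case: eqP; rewrite ?addr0.
Qed.
Lemma coord_ee i : coord i (e i) = 1. Proof. by rewrite coord_e eqxx. Qed.
Lemma coord_en i j : i != j -> coord j (e i) = 0.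
Proof. by rewrite coord_e => /negbTE ->. Qed.

Definition supp (a : A) : seq J := undup (map fst (coefs_of a)).
Lemma supp_uniq a : uniq (supp a). Proof. exact: undup_uniq. Qed.

Lemma coord_expand a : a = \sum_(i <- supp a) coord i a *: e i.
Proof. by rewrite -{1}(coefs_ofK a) lincomb_collect. Qed.

Lemma coord_notin_supp a j : j \notin supp a -> coord j a = 0.
Proof.
rewrite mem_undup => ja; apply: big1_seq => p /andP[/eqP pj pa].
by move: ja; rewrite -pj map_f.
Qed.

Lemma coord_eq0 a : (forall i, coord i a = 0) -> a = 0.
Proof. by move=> a0; rewrite (coord_expand a) big1 // => i _; rewrite a0 scale0r. Qed.

Hypothesis mul_e_orth : forall i j : I, i <> j -> mul (e i) (e j) = 0.

Lemma bmul_ey (k : J) y : mul (e k) y = coord k y *: mul (e k) (e k).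
Proof.
rewrite {1}(coord_expand y) bmul_sumr.
rewrite (@big_uniq_single _ _ _ k _ (supp_uniq y)) ?bmulZr //.
- by move=> l lk; rewrite bmulZr mul_e_orth ?scaler0 // => kl; rewrite kl eqxx in lk.
- by move/coord_notin_supp ->; rewrite scale0r.
Qed.

Lemma bmul_ye (k : J) y : mul y (e k) = coord k y *: mul (e k) (e k).
Proof.
rewrite {1}(coord_expand y) bmul_suml.
rewrite (@big_uniq_single _ _ _ k _ (supp_uniq y)) ?bmulZl //.
- by move=> l lk; rewrite bmulZl mul_e_orth ?scaler0 // => lk'; rewrite lk' eqxx in lk.
- by move/coord_notin_supp ->; rewrite scale0r.
Qed.

Lemma bmulC x y : mul x y = mul y x.
Proof.
rewrite [in LHS](coord_expand x) [in RHS](coord_expand x) bmul_suml bmul_sumr.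
by apply: eq_bigr => k _; rewrite bmulZl bmulZr bmul_ey (bmul_ye k y).
Qed.

Definition omega (i j : J) : K := coord i (mul (e j) (e j)).

Definition isolated (i : J) : Prop :=
  omega i i != 0 /\ forall j, j != i -> omega i j = 0.

Lemma coord_bmul_isolated i x y : isolated i ->
  coord i (mul x y) = coord i x * coord i y * omega i i.
Proof.
case=> _ omega_i0; rewrite {1}(coord_expand x) bmul_suml coord_sum.
have coordF k : coord i (mul (coord k x *: e k) y) = coord k x * coord k y * omega i k.
  by rewrite bmulZl bmul_ey !coordZ mulrA.
under eq_bigr do rewrite coordF.
rewrite (@big_uniq_single _ _ _ i _ (supp_uniq x)) // => [k /omega_i0 ->|/coord_notin_supp ->].
- by rewrite mulr0.
- by rewrite !mul0r.
Qed.

Lemma isolated_kernel_ideal i : isolated i -> is_ideal mul (fun a => coord i a = 0).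
Proof.
move=> iso; split; first exact: coord0.
split; first by move=> a b a0 b0; rewrite coordD a0 b0 addr0.
split; first by move=> k a a0; rewrite coordZ a0 mulr0.
by move=> a x a0; rewrite !coord_bmul_isolated // a0 ?mulr0 ?mul0r.
Qed.

Lemma isolated_kernel_maximal_modular i :
  isolated i -> maximal_modular_ideal mul (fun a => coord i a = 0).
Proof.
move=> iso; split; last first.
  exists ((omega i i)^-1 *: e i) => a.
  by rewrite coordB coord_bmul_isolated // coordZ coord_ee mulr1 divfK ?subrr //; case: iso.
split; first exact: isolated_kernel_ideal.
split; first by exists (e i); rewrite coord_ee => /eqP; rewrite oner_eq0.
move=> N N_ideal kerN.
have [[b Nb bi]|N_ker] := pselect (exists2 b, N b & coord i b != 0).
  right=> a.
  have -> : a = (a - (coord i a / coord i b) *: b) + (coord i a / coord i b) *: b.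
    by rewrite subrK.
  apply: (idealD N_ideal); last exact: (idealZ N_ideal _ Nb).
  by apply: kerN; rewrite coordB coordZ divfK ?subrr.
left=> a; split=> [Na|]; last exact: kerN.
by have [|ai] := eqVneq (coord i a) 0; last by case: N_ker; exists a.
Qed.

Lemma ideal_basis (M : A -> Prop) : is_ideal mul M ->
  (forall j, M (e j)) -> forall a, M a.
Proof.
move=> M_ideal Me a; rewrite (coord_expand a).
by apply: (ideal_sum M_ideal) => j _; exact: (idealZ M_ideal).
Qed.

Section MaximalModularIdeal.
Variables (M : A -> Prop) (u : A).
Hypothesis M_ideal : is_ideal mul M.
Hypothesis M_max : forall N, is_ideal mul N -> (forall a, M a -> N a) ->
  (forall a, N a <-> M a) \/ (forall a, N a).
Hypothesis u_unit : forall a, M (a - mul a u).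
Variable i : J.
Hypothesis ei_notin : ~ M (e i).

Lemma unit_square : M (e i - coord i u *: mul (e i) (e i)).
Proof. by have := u_unit (e i); rewrite bmul_ey. Qed.

Lemma coord_unit_neq0 : coord i u != 0.
Proof.
by apply/eqP => u0; apply: ei_notin; move: unit_square; rewrite u0 scale0r subr0.
Qed.

(* The ideal M + K e_i: it absorbs products because x e_i = coord_i x e_i^2,
   and e_i^2 is congruent to e_i / coord_i u modulo M. *)
Lemma ideal_add_line : is_ideal mul (fun a => exists t, M (a - t *: e i)).
Proof.
have Mx a x : (exists t, M (a - t *: e i)) -> exists t, M (mul x a - t *: e i).
  case=> t Ma; exists (t * coord i x / coord i u); set c := t * coord i x / coord i u.
  have -> : mul x a - c *: e i =
      mul x (a - t *: e i) - c *: (e i - coord i u *: mul (e i) (e i)).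
    rewrite bmulDr bmulNr bmulZr (bmul_ye i x) scalerBr !scalerA /c divfK ?coord_unit_neq0 //.
    by rewrite opprB addrA subrK.
  by apply: (idealB M_ideal); [exact: (idealMl M_ideal) | exact: (idealZ M_ideal) unit_square].
split; first by exists 0; rewrite scale0r subr0; exact: ideal0.
split.
  move=> a b [t Ma] [t' Mb]; exists (t + t').
  by rewrite scalerDl opprD addrACA; exact: (idealD M_ideal).
split.
  by move=> k a [t Ma]; exists (k * t); rewrite -scalerA -scalerBr; exact: (idealZ M_ideal).
by move=> a x Na; split; last rewrite bmulC; exact: Mx.
Qed.

Lemma basis_in_ideal j : j != i -> M (e j).
Proof.
move=> ji; have M_N a : M a -> exists t, M (a - t *: e i).
  by exists 0; rewrite scale0r subr0.
have [N_M|N_all] := M_max ideal_add_line M_N.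
- by case: ei_notin; apply/N_M; exists 1; rewrite scale1r subrr; exact: ideal0.
- have [t Mjt] := N_all (e j).
  have Mjj : M (mul (e j) (e j)).
    have := idealMr M_ideal (e j) Mjt.
    by rewrite bmul_ye coordB coordZ coord_ee coord_en 1?eq_sym // mulr0 subr0 scale1r.
  rewrite -(subrK (coord j u *: mul (e j) (e j)) (e j)).
  by apply: (idealD M_ideal); [rewrite -bmul_ey; exact: u_unit | exact: (idealZ M_ideal)].
Qed.

Lemma ideal_coord_eq0 a : coord i a = 0 -> M a.
Proof.
move=> ai; rewrite (coord_expand a); apply: (ideal_sum M_ideal) => j _.
have [->|ji] := eqVneq j i; first by rewrite ai scale0r; exact: ideal0.
exact/(idealZ M_ideal)/basis_in_ideal.
Qed.

Lemma idealE a : M a <-> coord i a = 0.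
Proof.
split=> [Ma|]; last exact: ideal_coord_eq0.
have [//|ai] := eqVneq (coord i a) 0; case: ei_notin.
have Mai : M (coord i a *: e i).
  rewrite -[_ *: _](subKr a); apply: (idealB M_ideal) => //; apply: ideal_coord_eq0.
  by rewrite coordB coordZ coord_ee mulr1 subrr.
by rewrite -[e i](scalerK ai); exact: (idealZ M_ideal).
Qed.

Lemma isolated_of_maximal : isolated i.
Proof.
split.
  have /idealE := unit_square; rewrite coordB coordZ coord_ee -/(omega i i) => /eqP.
  by apply: contraTneq => ->; rewrite mulr0 subr0 oner_neq0.
move=> j ji; apply/idealE.
exact: (idealMl M_ideal) (basis_in_ideal ji).
Qed.
End MaximalModularIdeal.

Lemma maximal_modular_kernel M : maximal_modular_ideal mul M ->
  exists2 i, isolated i & forall a, M a <-> coord i a = 0.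
Proof.
case=> [[M_ideal [[a Ma] M_max]] [u u_unit]].
have [i ei_notin] : exists i : J, ~ M (e i).
  apply: contrapT => Me; apply: Ma; apply: (ideal_basis M_ideal) => j.
  by apply: contrapT => ej_notin; apply: Me; exists j.
exists i; first exact: (isolated_of_maximal M_ideal M_max u_unit ei_notin).
exact: (idealE M_ideal M_max u_unit ei_notin).
Qed.

Lemma RadE a : Rad mul a <-> forall i, isolated i -> coord i a = 0.
Proof.
split=> [Rad_a i iso|a0 M /maximal_modular_kernel[i iso ->]]; last exact: a0.
exact: Rad_a _ (isolated_kernel_maximal_modular iso).
Qed.

Lemma Rad_square i : isolated i -> Rad mul (mul (e i) (e i) - omega i i *: e i).
Proof.
move=> iso; apply/RadE => j [_ iso_j]; rewrite coordB coordZ coord_e.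
have [->|/iso_j] := eqVneq i j; first by rewrite mulr1 subrr.
by rewrite /omega => ->; rewrite mulr0 subr0.
Qed.

Lemma semisimple_isolatedP : semisimple mul <-> forall i, isolated i.
Proof.
split=> [ss i|iso a /RadE Rad_a]; last by apply: coord_eq0 => i; exact: Rad_a.
apply: contrapT => not_iso.
have /ss ei0 : Rad mul (e i).
  by apply/RadE => j iso_j; apply: coord_en; apply/eqP => ij; apply: not_iso; rewrite ij.
by have /eqP := coord_ee i; rewrite ei0 coord0 eq_sym oner_eq0.
Qed.

Lemma nonzero_trivial_of_isolated : (exists a : A, a <> 0) -> (forall i, isolated i) ->
  nonzero_trivial_evolution mul.
Proof.
move=> nz iso; split=> //.
exists J, e, (fun i => omega i i); split; first by split.
move=> i; split; first by apply/eqP; case: (iso i).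
exact: semisimple_isolatedP.2 iso _ (Rad_square (iso i)).
Qed.

Lemma isolated_of_trivial (w : I -> K) :
  (forall i, w i <> 0 /\ zero_set (mul (e i) (e i) - w i *: e i)) -> forall i, isolated i.
Proof.
move=> sq i; have ee j : mul (e j) (e j) = w j *: e j by apply/subr0_eq; case: (sq j).
split=> [|j ji]; rewrite /omega ee coordZ ?coord_ee ?mulr1; first by apply/eqP; case: (sq i).
by rewrite coord_en ?mulr0.
Qed.

Local Notation isolated_index := {i : J | `[< isolated i >]}.

Lemma isolated_val (x : isolated_index) : isolated (val x).
Proof. exact: elimT (asboolP _) (valP x). Qed.

Lemma Rad_quotient_span a : exists (n : nat) (f : 'I_n -> isolated_index) (c : 'I_n -> K),
  Rad mul (a - \sum_(k < n) c k *: e (val (f k))).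
Proof.
pose s := pmap insub (supp a) : seq isolated_index.
exists (size s), (tnth (in_tuple s)), (fun k => coord (val (tnth (in_tuple s) k)) a).
rewrite -(big_tnth _ _ _ xpredT (fun x : isolated_index => coord (val x) a *: e (val x))).
rewrite big_pmap; apply/RadE => i iso; rewrite coordB coord_sum.
rewrite (@big_uniq_single _ _ _ i _ (supp_uniq a)) /=.
- by rewrite insubT ?asboolT //= coordZ coord_ee mulr1 subrr.
- move=> j ji; case: insubP => [x _ xj|_] /=; last exact: coord0.
  by rewrite coordZ coord_en ?mulr0 // xj.
- by move/coord_notin_supp => a0; rewrite insubT ?asboolT //= coordZ a0 mul0r.
Qed.

Lemma Rad_quotient_free (n : nat) (f : 'I_n -> isolated_index) (c : 'I_n -> K) :
  injective f -> Rad mul (\sum_(k < n) c k *: e (val (f k))) -> forall k, c k = 0.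
Proof.
move=> f_inj /RadE Rad0 k; have := Rad0 _ (isolated_val (f k)).
rewrite coord_sum (bigD1 k) //= big1 => [|l lk]; first by rewrite coordZ coord_ee mulr1 addr0.
by rewrite coordZ coord_en ?mulr0 //; apply: contra lk => /eqP/val_inj/f_inj ->.
Qed.

Lemma Rad_quotient_trivial :
  (forall a, Rad mul a) \/ nonzero_trivial_evolution_mod mul (Rad mul).
Proof.
have [[i0 iso0]|no_iso] := pselect (exists i, isolated i); last first.
  by left=> a; apply/RadE => i iso; case: no_iso; exists i.
right; split.
  by exists (e i0) => /RadE/(_ i0 iso0)/eqP; rewrite coord_ee oner_eq0.
exists isolated_index, (fun x => e (val x)), (fun x => omega (val x) (val x)).
split; first split.
- by split; [exact: Rad_quotient_span | exact: Rad_quotient_free].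
- move=> x y xy; rewrite mul_e_orth; last by move/val_inj.
  by apply/RadE => i _; exact: coord0.
- move=> x; split; first by apply/eqP; case: (isolated_val x).
  exact: Rad_square (isolated_val x).
Qed.

End EvolutionAlgebra.

Theorem corollary3p14 (K : numFieldType) (A : lmodType K) (mul : A -> A -> A)
  (Hbil : bilinear_prod mul) (Hevo : evolution_algebra mul)
  (Hnz : exists a : A, a <> 0) :
  (semisimple mul <-> nonzero_trivial_evolution mul) /\
  ((forall a : A, Rad mul a) \/ nonzero_trivial_evolution_mod mul (Rad mul)).
Proof.
case: Hevo => I [e [basis_e orth_e]].
split; last exact: (Rad_quotient_trivial Hbil basis_e orth_e).
split=> [/(semisimple_isolatedP Hbil basis_e orth_e) iso|].
  exact: (nonzero_trivial_of_isolated Hbil orth_e Hnz iso).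
case=> _ [I' [e' [w [[basis_e' orth_e'] sq]]]].
exact/(semisimple_isolatedP Hbil basis_e' orth_e')/(isolated_of_trivial basis_e' sq).
Qed.
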